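(* Let $m>1$ and let $T$ be a regular tournament matrix of order $m$. Put $N=T\otimes J_2+I_{2m}$. Let $H$ be a regular graph of order $2m$ with vertex set $X$, having an automorphism $\rho$ that is a fixed-point-free involution, such that the orbits of the full automorphism group of $H$ on $X$ are exactly the orbits of $\rho$. Let $B$ be the adjacency matrix of $H$, with vertices indexed so that $\rho$ is represented by the permutation matrix $R=I_m\otimes(J_2-I_2)$. Let $G$ be the graph on the disjoint union of two copies $X_1,X_2$ of $X$ with adjacency matrix \[ A=\begin{bmatrix} B & N\\ N^{\top} & B\end{bmatrix} \] (the first block row/column indexed by $X_1$, the second by $X_2$). Then $X_1$ is a Godsil-McKay switching set of $G$, the graph $G'$ obtained by Godsil-McKay switching with respect to $X_1$ is isomorphic to $G$, and there is no isomorphism from $G$ to $G'$ that maps $X_1$ onto itself.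
   Context: A $(0,1)$-matrix $T$ of order $m$ is a tournament matrix if $T+T^{\top}=J-I$; it is regular if all its row sums are equal. $J_2$ is the $2\times 2$ all-ones matrix, $I_k$ the $k\times k$ identity, and $\otimes$ the Kronecker product. A subset $X$ of the vertex set of a graph $G$ is a (Godsil-McKay) switching set if $X$ induces a regular subgraph of $G$ and every vertex outside $X$ has either $0$, $\tfrac12|X|$ or $|X|$ neighbours in $X$. Godsil-McKay switching with respect to $X$ produces the graph $G'$ on the same vertex set obtained as follows: for each vertex $x\notin X$ having exactly $\tfrac12|X|$ neighbours in $X$, delete the edges from $x$ to these neighbours and join $x$ instead to the other $\tfrac12|X|$ vertices of $X$; all other adjacencies are unchanged. *)

From mathcomp Require Import all_boot all_order all_algebra all_fingroup.
From mathcomp Require Import mxtens.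
Set Implicit Arguments. Unset Strict Implicit. Unset Printing Implicit Defensive.
Import GRing.Theory Num.Theory.
Local Open Scope ring_scope.

(* Integer matrices are used for (0,1)-matrices. Kronecker product: tensmx
   (notation A *t B) from mathcomp-real-closed's mxtens, with the standard
   index (i,j) |-> i*p + j. *)

Definition zero_one_mx {m n} (A : 'M[int]_(m, n)) : Prop :=
  forall i j, A i j = 0 \/ A i j = 1.

Definition tournament_mx {m} (T : 'M[int]_m) : Prop :=
  zero_one_mx T /\ T + T^T = const_mx 1 - 1%:M.

Definition regular_mx {m} (T : 'M[int]_m) : Prop :=
  exists k : int, forall i, \sum_j T i j = k.

Definition adjacency_mx {n} (A : 'M[int]_n) : Prop :=
  zero_one_mx A /\ A^T = A /\ forall i, A i i = 0.

Definition adj {n} (A : 'M[int]_n) : rel 'I_n := fun x y => A x y == 1.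

Definition nbrs_in {V : finType} (e : rel V) (X : {set V}) (x : V) : nat :=
  #|[set y in X | e x y]|.

Definition regular_graph {V : finType} (e : rel V) : Prop :=
  exists k, forall x : V, #|[set y | e x y]| = k.

Definition graph_aut {V : finType} (e : rel V) (s : {perm V}) : Prop :=
  forall x y, e (s x) (s y) = e x y.

Definition graph_iso {V : finType} (e1 e2 : rel V) (s : {perm V}) : Prop :=
  forall x y, e2 (s x) (s y) = e1 x y.

Definition GM_switching_set {V : finType} (e : rel V) (X : {set V}) : Prop :=
  (exists k, forall x, x \in X -> nbrs_in e X x = k) /\
  (forall x, x \notin X ->
     [\/ nbrs_in e X x = 0%N, (nbrs_in e X x).*2 = #|X| | nbrs_in e X x = #|X|]).

Definition half_outside {V : finType} (e : rel V) (X : {set V}) (x : V) : bool :=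
  (x \notin X) && ((nbrs_in e X x).*2 == #|X|).

Definition GM_switch {V : finType} (e : rel V) (X : {set V}) : rel V :=
  fun x y =>
    if ((x \in X) && half_outside e X y) || ((y \in X) && half_outside e X x)
    then ~~ e x y else e x y.

From mathcomp Require Import all_boot all_order all_algebra all_fingroup.
From mathcomp Require Import mxtens zify.
Import GRing.Theory Num.Theory.
Set Implicit Arguments. Unset Strict Implicit.
Local Open Scope ring_scope.

(* Every column of N = T (x) J_2 + I has m ones because T is a regular
   tournament, so each vertex of X2 has |X1|/2 neighbours in X1 and switching
   replaces N by J - N.  Since N + N^T R = J, exchanging the two copies of X
   and applying rho on the second one maps G onto G'.  An isomorphism fixing X1
   setwise would restrict to automorphisms of H on both copies; these preserve
   the rho-orbits, on which the entries of N between distinct orbits depend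
   only, so no such entry can be complemented. *)

Local Notation blk x := (mxtens_unindex x).1.
Local Notation pos x := (mxtens_unindex x).2.

Lemma mxtens_unindex_eq m n (x y : 'I_(m * n)) :
  (x == y) = (blk x == blk y) && (pos x == pos y).
Proof.
rewrite -(inj_eq (can_inj (@mxtens_unindexK m n))).
by case: (mxtens_unindex x) (mxtens_unindex y) => [? ?] [? ?].
Qed.

Section Tournament.

Variables (m : nat) (T : 'M[int]_m).
Hypothesis HT : tournament_mx T.

Lemma tournament_mxE i j : T i j + T j i = 1 - (i == j)%:R.
Proof. by case: HT => _ /matrixP/(_ i j); rewrite !mxE. Qed.

Lemma tournament_mx_diag i : T i i = 0.
Proof. by have := tournament_mxE i i; rewrite eqxx; lia. Qed.

Lemma tournament_colsum j : \sum_i T i j = m%:R - 1 - \sum_i T j i.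
Proof.
transitivity (\sum_i ((1 - (i == j)%:R) - T j i)).
  by apply: eq_bigr => i _; rewrite -tournament_mxE; lia.
rewrite sumrB sumrB sumr_const card_ord (bigD1 j) //= eqxx.
by rewrite big1 ?addr0 // => i /negbTE ->.
Qed.

Variable k : int.
Hypotheses (Hm : (0 < m)%N) (Hk : forall i, \sum_j T i j = k).

(* Double counting the ones of T by rows and by columns. *)
Lemma regular_tournament_score : k *+ 2 = m%:R - 1.
Proof.
have tot : m%:R * k = m%:R * (m%:R - 1 - k) :> int.
  transitivity (\sum_(i < m) \sum_(j < m) T i j).
    by rewrite (eq_bigr _ (fun i _ => Hk i)) sumr_const card_ord mulr_natl.
  rewrite exchange_big (eq_bigr (fun j => m%:R - 1 - k)) => [|j _].
    by rewrite sumr_const card_ord mulr_natl.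
  by rewrite tournament_colsum Hk.
have := mulfI _ tot; rewrite pnatr_eq0 -lt0n Hm => /(_ isT); lia.
Qed.

Lemma regular_tournament_colsum j : \sum_i T i j = k.
Proof. by rewrite tournament_colsum Hk; have := regular_tournament_score; lia. Qed.

End Tournament.

Lemma ord2_indicator (i j k : 'I_2) : j != k -> (i == j)%:R + (i == k)%:R = 1 :> int.
Proof. by case: i j k => [[|[|//]] ?] [[|[|//]] ?] [[|[|//]] ?]. Qed.

Lemma zero_one_col_ones p q (M : 'M[int]_(p, q)) : zero_one_mx M ->
  forall j, (#|[set i | M i j == 1]|%:R : int) = \sum_i M i j.
Proof.
move=> M01 j; rewrite -sum1_card natr_sum big_mkcond /=.
by apply: eq_bigr => i _; rewrite inE; case: (M01 i j) => ->.
Qed.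

Definition blowup_mx m (T : 'M[int]_m) : 'M[int]_(m * 2) :=
  T *t (const_mx 1 : 'M[int]_2) + 1%:M.

Section Blowup.

Variables (m : nat) (T : 'M[int]_m).
Hypothesis HT : tournament_mx T.

Lemma blowup_mxE x y : blowup_mx T x y = T (blk x) (blk y) + (x == y)%:R.
Proof. by rewrite !mxE mulr1. Qed.

Lemma blowup_mx_offblock x y : blk x != blk y -> blowup_mx T x y = T (blk x) (blk y).
Proof. by move=> /negbTE ne; rewrite blowup_mxE mxtens_unindex_eq ne addr0. Qed.

Lemma blowup_mx01 : zero_one_mx (blowup_mx T).
Proof.
move=> x y; rewrite blowup_mxE; have [->|_] := eqVneq x y.
  by rewrite tournament_mx_diag // add0r; right.
by rewrite addr0; case: HT => /(_ (blk x) (blk y)).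
Qed.

(* In matrix form, N + N^T R = J. *)
Lemma blowup_mx_flip (rho : 'I_(m * 2) -> 'I_(m * 2)) :
  (forall x, blk (rho x) = blk x /\ pos (rho x) != pos x) ->
  forall x y, blowup_mx T (rho y) x + blowup_mx T x y = 1.
Proof.
move=> Hrho x y; have [blk_rho pos_rho] := Hrho y.
rewrite !blowup_mxE !mxtens_unindex_eq blk_rho.
have [eblk|neblk] := eqVneq (blk y) (blk x); last first.
  by rewrite /= !addr0 tournament_mxE // (negbTE neblk) subr0.
rewrite eblk !tournament_mx_diag //= !add0r.
by rewrite (eq_sym (pos (rho y))); exact: ord2_indicator.
Qed.

Lemma blowup_mx_col_ones : (0 < m)%N -> regular_mx T ->
  forall y, #|[set x | blowup_mx T x y == 1]| = m.
Proof.
move=> Hm [k Hk] y; apply/eqP; rewrite -(eqr_nat int) (zero_one_col_ones blowup_mx01).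
rewrite (eq_bigr _ (fun x _ => blowup_mxE x y)) big_split /=.
have -> : \sum_x ((x == y)%:R : int) = 1.
  by rewrite (bigD1 y) //= eqxx big1 ?addr0 // => x /negbTE ->.
rewrite (reindex (@mxtens_index m 2)) /=; last first.
  exact: onW_bij (Bijective (@mxtens_indexK m 2) (@mxtens_unindexK m 2)).
rewrite (eq_bigr (fun ij => T ij.1 (blk y))) => [|ij _]; last first.
  by rewrite -[LHS]/(T (blk (mxtens_index ij)) (blk y)) mxtens_indexK.
rewrite -(pair_bigA _ (fun i (_ : 'I_2) => T i (blk y))) /=.
rewrite (eq_bigr (fun i => T i (blk y) *+ 2)) => [|i _]; last by rewrite sumr_const card_ord.
rewrite sumrMnl (regular_tournament_colsum HT Hm Hk) (regular_tournament_score HT Hm Hk).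
lia.
Qed.

End Blowup.

Lemma perm_mx_swap_blk m (rho : {perm 'I_(m * 2)}) :
  perm_mx rho = (1%:M : 'M[int]_m) *t (const_mx 1 - 1%:M : 'M[int]_2) ->
  forall x, blk (rho x) = blk x /\ pos (rho x) != pos x.
Proof.
move=> /matrixP Hmx x; have := Hmx x (rho x); rewrite /perm_mx !mxE eqxx.
case: eqP => [eblk|_]; case: eqP => [_|npos] // _.
by split; [rewrite eblk | apply/eqP => /esym].
Qed.

Lemma perm_restr_image (V W : finType) (g : V -> W) (s : {perm W}) :
  injective g -> (forall v, exists v', s (g v) = g v') ->
  exists sV : {perm V}, forall v, s (g v) = g (sV v).
Proof.
move=> g_inj s_g.
pose f v := odflt v [pick v' | s (g v) == g v'].
have s_gf v : s (g v) = g (f v).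
  rewrite /f; case: pickP => [v' /eqP //|/= none].
  by have [v' e] := s_g v; move: (none v'); rewrite e eqxx.
have f_inj : injective f by move=> x y e; apply: g_inj; apply: (@perm_inj _ s); rewrite !s_gf e.
by exists (perm f_inj) => v; rewrite permE.
Qed.

Section BlockGraph.

Variables p q : nat.

Definition left_block : {set 'I_(p + q)} := [set lshift q i | i : 'I_p].

Lemma mem_left_block a : lshift q a \in left_block.
Proof. exact: imset_f. Qed.

Lemma rshift_notin_left_block b : rshift p b \notin left_block.
Proof. by apply/imsetP => -[a _ /eqP]; rewrite eq_rlshift. Qed.

Lemma card_left_block : #|left_block| = p.
Proof. by rewrite card_imset ?card_ord //; exact: lshift_inj. Qed.

Lemma nbrs_in_left_block (e : rel 'I_(p + q)) x :
  nbrs_in e left_block x = #|[set a | e x (lshift q a)]|.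
Proof.
rewrite /nbrs_in -(card_imset _ (@lshift_inj p q)); apply: eq_card => y.
rewrite inE -(splitK y); case: (split y) => [a|b] /=.
  by rewrite mem_left_block (mem_imset _ _ (@lshift_inj p q)) inE.
rewrite (negbTE (rshift_notin_left_block b)); apply/esym/imsetP => -[a _ /eqP].
by rewrite eq_rlshift.
Qed.

Section Adjacency.

Variables (Aul : 'M[int]_p) (Aur : 'M[int]_(p, q)) (Adl : 'M[int]_(q, p)) (Adr : 'M[int]_q).
Let A := block_mx Aul Aur Adl Adr.

Lemma adj_blockLL a b : adj A (lshift q a) (lshift q b) = adj Aul a b.
Proof. by rewrite /adj block_mxEul. Qed.

Lemma adj_blockLR a b : adj A (lshift q a) (rshift p b) = (Aur a b == 1).
Proof. by rewrite /adj block_mxEur. Qed.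

Lemma adj_blockRL a b : adj A (rshift p a) (lshift q b) = (Adl a b == 1).
Proof. by rewrite /adj block_mxEdl. Qed.

Lemma adj_blockRR a b : adj A (rshift p a) (rshift p b) = adj Adr a b.
Proof. by rewrite /adj block_mxEdr. Qed.

End Adjacency.

Definition adj_blockE := (adj_blockLL, adj_blockLR, adj_blockRL, adj_blockRR).

Lemma perm_left_block_stable (s : {perm 'I_(p + q)}) : s @: left_block = left_block ->
  exists (s1 : {perm 'I_p}) (s2 : {perm 'I_q}),
    (forall a, s (lshift q a) = lshift q (s1 a)) /\ (forall b, s (rshift p b) = rshift p (s2 b)).
Proof.
move=> sX1.
have sL a : exists a', s (lshift q a) = lshift q a'.
  have : s (lshift q a) \in left_block by rewrite -sX1 imset_f ?mem_left_block.
  by case/imsetP => a' _ ->; exists a'.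
have sR b : exists b', s (rshift p b) = rshift p b'.
  have : s (rshift p b) \notin left_block.
    by rewrite -sX1 (mem_imset _ _ (@perm_inj _ s)) rshift_notin_left_block.
  rewrite -(splitK (s _)); case: (split _) => [a|b'] /=; first by rewrite mem_left_block.
  by exists b'.
have [s1 Hs1] := perm_restr_image (@lshift_inj p q) sL.
have [s2 Hs2] := perm_restr_image (@rshift_inj p q) sR.
by exists s1, s2.
Qed.

Variables (B1 : 'M[int]_p) (B2 : 'M[int]_q) (N : 'M[int]_(p, q)).
Local Notation A := (block_mx B1 N N^T B2).

(* An isomorphism fixing X1 setwise restricts to automorphisms on both
   blocks; it cannot then complement an entry of N that all such pairs of
   automorphisms preserve. *)
Lemma no_block_iso_stable (N' : 'M[int]_(p, q)) a b :
  (forall a b, (N' a b == 1) = ~~ (N a b == 1)) ->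
  (forall s1 s2, graph_aut (adj B1) s1 -> graph_aut (adj B2) s2 -> N (s1 a) (s2 b) = N a b) ->
  ~ exists s, graph_iso (adj A) (adj (block_mx B1 N' N'^T B2)) s /\ s @: left_block = left_block.
Proof.
move=> N'_compl N_fixed [s [iso /perm_left_block_stable [s1 [s2 [Hs1 Hs2]]]]].
have aut1 : graph_aut (adj B1) s1.
  by move=> x y; have := iso (lshift q x) (lshift q y); rewrite !Hs1 !adj_blockE.
have aut2 : graph_aut (adj B2) s2.
  by move=> x y; have := iso (rshift p x) (rshift p y); rewrite !Hs2 !adj_blockE.
have := iso (lshift q a) (rshift p b).
by rewrite Hs1 Hs2 !adj_blockE N'_compl N_fixed //; case: (N a b == 1).
Qed.

Lemma nbrs_in_left_blockR b :
  nbrs_in (adj A) left_block (rshift p b) = #|[set a | N a b == 1]|.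
Proof. by rewrite nbrs_in_left_block; apply: eq_card => a; rewrite !inE adj_blockE mxE. Qed.

Hypothesis N01 : zero_one_mx N.
Hypothesis N_col_half : forall b, (#|[set a | N a b == 1]|).*2 = p.

Lemma block_GM_switching_set : regular_graph (adj B1) ->
  GM_switching_set (adj A) left_block.
Proof.
move=> [k Hk]; split.
  exists k => x; rewrite -(splitK x); case: (split x) => [a|b] /=; last first.
    by rewrite (negbTE (rshift_notin_left_block b)).
  move=> _; rewrite nbrs_in_left_block -(Hk a).
  by apply: eq_card => b; rewrite !inE adj_blockE.
move=> x; rewrite -(splitK x); case: (split x) => [a|b] /=.
  by rewrite mem_left_block.
by move=> _; apply: Or32; rewrite nbrs_in_left_blockR card_left_block.
Qed.

(* The vertices of the second block are exactly the ones with |X1|/2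
   neighbours in X1, so switching complements the off-diagonal blocks. *)
Lemma block_GM_switch :
  GM_switch (adj A) left_block
  =2 adj (block_mx B1 (const_mx 1 - N) (const_mx 1 - N)^T B2).
Proof.
have half_l a : half_outside (adj A) left_block (lshift q a) = false.
  by rewrite /half_outside mem_left_block.
have half_r b : half_outside (adj A) left_block (rshift p b).
  rewrite /half_outside rshift_notin_left_block nbrs_in_left_blockR card_left_block.
  exact/eqP/N_col_half.
have compl a b : ~~ (N a b == 1) = (1 - N a b == 1).
  by case: (N01 a b) => ->.
move=> x y; rewrite /GM_switch -(splitK x) -(splitK y).
case: (split x) => [a|a]; case: (split y) => [b|b] /=;
  rewrite ?half_l ?half_r ?mem_left_block ?(negbTE (rshift_notin_left_block _)) /=;
  by rewrite !adj_blockE ?mxE ?compl.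
Qed.

End BlockGraph.

(* The isomorphism exchanging the two copies, twisted by [rho] on the second. *)
Lemma block_swap_iso n (B N M : 'M[int]_n) (rho : {perm 'I_n}) :
  graph_aut (adj B) rho -> (forall a b, M (rho b) a = N a b) ->
  exists s : {perm 'I_(n + n)},
    graph_iso (adj (block_mx B N N^T B)) (adj (block_mx B M M^T B)) s.
Proof.
move=> aut_rho MN.
pose swap (u : 'I_n + 'I_n) := match u with inl a => inr a | inr b => inl (rho b) end.
have swap_inj : injective swap.
  by move=> [a|a] [b|b] //= [e]; [rewrite e | rewrite (perm_inj e)].
have f_inj : injective (unsplit \o swap \o split).
  exact: inj_comp (can_inj unsplitK) (inj_comp swap_inj (can_inj splitK)).
exists (perm f_inj) => x y; rewrite !permE -(splitK x) -(splitK y) /= !unsplitK.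
case: (split x) => [a|a]; case: (split y) => [b|b] /=;
  by rewrite !adj_blockE ?mxE ?MN ?aut_rho.
Qed.

Theorem proposition3p1 (m : nat) (Hm : (1 < m)%N)
  (T : 'M[int]_m) (HT : tournament_mx T) (HTreg : regular_mx T)
  (B : 'M[int]_(m * 2)) (HB : adjacency_mx B) (HHreg : regular_graph (adj B))
  (rho : {perm 'I_(m * 2)})
  (Hrho_mx : perm_mx rho = (1%:M : 'M[int]_m) *t (const_mx 1 - 1%:M : 'M[int]_2))
  (Hrho_aut : graph_aut (adj B) rho)
  (Hrho_inv : forall x, rho (rho x) = x)
  (Hrho_ffp : forall x, rho x != x)
  (Horbits : forall x y : 'I_(m * 2),
      (exists s : {perm 'I_(m * 2)}, graph_aut (adj B) s /\ s x = y) <->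
      (y = x \/ y = rho x)) :
  let N : 'M[int]_(m * 2) := T *t (const_mx 1 : 'M[int]_2) + 1%:M in
  let A : 'M[int]_(m * 2 + m * 2) := block_mx B N N^T B in
  let X1 : {set 'I_(m * 2 + m * 2)} := [set lshift (m * 2) i | i : 'I_(m * 2)] in
  GM_switching_set (adj A) X1 /\
  (exists s : {perm 'I_(m * 2 + m * 2)}, graph_iso (adj A) (GM_switch (adj A) X1) s) /\
  ~ (exists s : {perm 'I_(m * 2 + m * 2)},
        graph_iso (adj A) (GM_switch (adj A) X1) s /\ s @: X1 = X1).
Proof.
move=> N A X1.
have rho_blk := perm_mx_swap_blk Hrho_mx.
have N01 : zero_one_mx N := blowup_mx01 HT.
have N_col_half b : (#|[set a | N a b == 1]|).*2 = (m * 2)%N.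
  by rewrite (blowup_mx_col_ones HT (ltnW Hm) HTreg) muln2.
have N_flip a b : N (rho b) a + N a b = 1 := blowup_mx_flip HT rho_blk a b.
have N_offblock x y : blk x != blk y -> N x y = T (blk x) (blk y) := @blowup_mx_offblock _ _ x y.
clearbody N.
have Gsw : GM_switch (adj A) X1 =2 adj (block_mx B (const_mx 1 - N) (const_mx 1 - N)^T B).
  exact: block_GM_switch N01 N_col_half.
split; first exact: block_GM_switching_set N_col_half HHreg.
split.
  have compl_flip a b : (const_mx 1 - N) (rho b) a = N a b.
    by rewrite !mxE -(N_flip a b) addrAC subrr add0r.
  have [s iso] := block_swap_iso Hrho_aut compl_flip.
  by exists s => x y; rewrite Gsw.
have aut_blk s x : graph_aut (adj B) s -> blk (s x) = blk x.
  move=> aut_s; have [->|->] := (Horbits x (s x)).1 (ex_intro _ s (conj aut_s erefl)) => //.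
  exact: (rho_blk x).1.
case=> s [iso sX1]; pose a := mxtens_index (Ordinal (ltnW Hm), ord0 : 'I_2).
pose b := mxtens_index (Ordinal Hm, ord0 : 'I_2).
have ab_blk : blk a != blk b by rewrite !mxtens_indexK.
apply: (@no_block_iso_stable _ _ B B N (const_mx 1 - N) a b).
- by move=> x y; rewrite !mxE; case: (N01 x y) => ->.
- by move=> s1 s2 aut1 aut2; rewrite !N_offblock ?aut_blk.
- by exists s; split=> // x y; rewrite -Gsw.
Qed.
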